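(* Let $A$ be a set and $n\in\mathbb{N}$. The following are equivalent: (a) For every centraliser clone $F$ on $A$ we have $F=F^{(n)**}$. (b) For every centraliser clone $F$ we have $F^{(n)*}=F^*$. (c) For every centraliser clone $F$ we have $F^{(n)*(n)*}=F$. (d) For every centraliser clone $F$ there is some $G\subseteq\bigcup_{\ell\leq n}\mathrm{Op}^{(\ell)}(A)$ with $F=G^*$. (e) For every centraliser clone $F$ there is some $G\subseteq\mathrm{Op}^{(n)}(A)$ with $F=G^*$. (f) For every set $F\subseteq\mathrm{Op}(A)$ we have $F^{*(n)*}=F^{**}$. (g) For every centraliser clone $F$ we have $F^{*(n)*}=F$.
   Context: $\mathrm{Op}(A)$ is the set of all finitary operations $A^m\to A$ with $m\geq 1$ (nullary operations excluded), and $\mathrm{Op}^{(\ell)}(A)$ the set of $\ell$-ary ones. For $F\subseteq\mathrm{Op}(A)$, $F^{(n)}$ denotes the set of $n$-ary members of $F$. An $m$-ary $g$ commutes with an $n$-ary $h$ if $g\bigl((h((x_{ij})_{j}))_{i}\bigr)=h\bigl((g((x_{ij})_{i}))_{j}\bigr)$ for all $(x_{ij})\in A^{m\times n}$; $F^*$ (the centraliser of $F$) is the set of all $g\in\mathrm{Op}(A)$ commuting with every member of $F$. Superscript operators are applied from left to right, e.g. $F^{(n)*(n)*}=((((F^{(n)})^* )^{(n)})^* )$ and $F^{*(n)*}=((F^* )^{(n)})^*$. A centraliser clone is a set $F\subseteq\mathrm{Op}(A)$ with $F^{**}=F$. *)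

From mathcomp Require Import all_boot.
Set Implicit Arguments. Unset Strict Implicit. Unset Printing Implicit Defensive.

(* A finitary operation on A of arity m >= 1 (nullary operations excluded):
   we store m-1 in [ar_pred], so the arity [arity g] = (ar_pred g).+1 >= 1. *)
Record op (A : Type) := Op { ar_pred : nat; fn : ('I_ar_pred.+1 -> A) -> A }.
Arguments ar_pred {A} _.
Arguments fn {A} _ _.

Definition arity (A : Type) (g : op A) : nat := (ar_pred g).+1.

Definition opset (A : Type) := op A -> Prop.

Definition opset_eq (A : Type) (F G : opset A) : Prop := forall g, F g <-> G g.
Definition opset_sub (A : Type) (F G : opset A) : Prop := forall g, F g -> G g.

Definition commutes (A : Type) (g h : op A) : Prop :=
  forall x : 'I_(ar_pred g).+1 -> 'I_(ar_pred h).+1 -> A,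
    fn g (fun i => fn h (fun j => x i j)) = fn h (fun j => fn g (fun i => x i j)).

Definition centraliser (A : Type) (F : opset A) : opset A :=
  fun g => forall f, F f -> commutes g f.

Definition nary (A : Type) (n : nat) (F : opset A) : opset A :=
  fun g => F g /\ arity g = n.

Definition upto_arity (A : Type) (n : nat) : opset A := fun g => arity g <= n.
Definition of_arity (A : Type) (n : nat) : opset A := fun g => arity g = n.

Definition centraliser_clone (A : Type) (F : opset A) : Prop :=
  opset_eq (centraliser (centraliser F)) F.

(* Centralisation F |-> F^* is an antitone Galois connection on sets of
   operations, so F^*** = F^* and the centraliser clones are exactly the sets
   of the form G^*.  All conditions then reduce to one fact: if F = G^* with
   G consisting of n-ary operations, then G lies in F^*(n), whence
   F^*(n)* = F.  Conditions (d) and (e) are linked by padding an operation of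
   arity at most n with fictitious arguments, which does not change what it
   commutes with. *)

From Stdlib Require Import Setoid Morphisms FunctionalExtensionality.
From mathcomp Require Import all_boot.
Set Implicit Arguments. Unset Strict Implicit. Unset Printing Implicit Defensive.

Section Centraliser.
Variable A : Type.
Implicit Types (F G : opset A) (g h : op A).
Local Notation C := (@centraliser A).

(* Without this, ssreflect's [rewrite] unfolds [opset_eq] to a pointwise [iff]
   instead of rewriting with it as a setoid equality. *)
#[export] Instance opset_eq_RewriteRelation : RewriteRelation (@opset_eq A) := {}.

#[export] Instance opset_eq_Equivalence : Equivalence (@opset_eq A).
Proof.
by split=> [F g | F G E g | F G H E1 E2 g] //; [apply: iff_sym | apply: iff_trans].
Qed.

Lemma commutes_sym g h : commutes g h -> commutes h g.
Proof. by move=> gh x; rewrite (gh (fun i j => x j i)). Qed.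

Lemma centraliserS F G : opset_sub F G -> opset_sub (C G) (C F).
Proof. by move=> FG g Gg f /FG; apply: Gg. Qed.

#[export] Instance centraliser_Proper : Proper (@opset_eq A ==> @opset_eq A) C.
Proof. by move=> F G E g; split; apply: centraliserS => f /E. Qed.

#[export] Instance nary_Proper n : Proper (@opset_eq A ==> @opset_eq A) (nary n).
Proof. by move=> F G E g; split=> -[/E]. Qed.

Lemma sub_bicentraliser F : opset_sub F (C (C F)).
Proof. by move=> g Fg f /(_ g Fg); apply: commutes_sym. Qed.

Lemma tricentraliser F : opset_eq (C (C (C F))) (C F).
Proof.
by move=> g; split; [apply/centraliserS/sub_bicentraliser | apply: sub_bicentraliser].
Qed.

Lemma centraliser_clone_centraliser F : centraliser_clone (C F).
Proof. exact: tricentraliser. Qed.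

Lemma sub_centraliser_nary_centraliser n F : opset_sub F (C (nary n (C F))).
Proof. by move=> g Fg f [/(_ g Fg) fg _]; apply: commutes_sym. Qed.

Lemma centraliser_nary_centraliser_of_arity n F G :
  opset_sub G (of_arity n) -> opset_eq F (C G) -> opset_eq (C (nary n (C F))) F.
Proof.
move=> G_n ->; split; last exact: sub_centraliser_nary_centraliser.
apply: centraliserS => f Gf; split; [exact: sub_bicentraliser | exact: G_n].
Qed.

Definition pad n g : op A := Op (fun x : 'I_n.-1.+1 -> A => fn g (fun i => x (inord i))).

Lemma arity_pad n g : arity g <= n -> arity (pad n g) = n.
Proof. by move=> le_gn; rewrite /arity prednK // (leq_trans _ le_gn). Qed.

Lemma commutes_pad n g h : arity g <= n -> commutes h (pad n g) <-> commutes h g.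
Proof.
move=> le_gn; split=> hg x; last exact: (hg (fun i k => x i (inord k))).
have inord_inord (k : 'I_(arity g)) : inord (inord k : 'I_n.-1.+1) = k.
  have lt_kn : k < n.-1.+1.
    by rewrite prednK ?(leq_trans (ltn_ord k)) // (leq_trans _ le_gn).
  by apply: val_inj; rewrite /= (inordK lt_kn) inordK.
have xE : (fun i (k : 'I_(arity g)) => x i (inord (inord k : 'I_n.-1.+1))) = x.
  apply: functional_extensionality => i.
  by apply: functional_extensionality => k; rewrite inord_inord.
by rewrite -xE; apply: (hg (fun i j => x i (inord j))).
Qed.

Definition pad_ops n G : opset A := fun g' => exists2 g, G g & g' = pad n g.

Lemma pad_ops_of_arity n G :
  opset_sub G (upto_arity n) -> opset_sub (pad_ops n G) (of_arity n).
Proof. by move=> G_n _ [g /G_n le_gn ->]; apply: arity_pad. Qed.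

Lemma centraliser_pad_ops n G :
  opset_sub G (upto_arity n) -> opset_eq (C (pad_ops n G)) (C G).
Proof.
move=> G_n f; split=> [Cf g Gg | Cf _ [g Gg ->]].
  by apply/(commutes_pad _ (G_n _ Gg)); apply: Cf; exists g.
by apply/(commutes_pad _ (G_n _ Gg)); apply: Cf.
Qed.

End Centraliser.

Theorem proposition2p1 (A : Type) (n : nat) :
  [<->
   (* (a) *) forall F : opset A, centraliser_clone F ->
       opset_eq F (centraliser (centraliser (nary n F)));
   (* (b) *) forall F : opset A, centraliser_clone F ->
       opset_eq (centraliser (nary n F)) (centraliser F);
   (* (c) *) forall F : opset A, centraliser_clone F ->
       opset_eq (centraliser (nary n (centraliser (nary n F)))) F;
   (* (d) *) forall F : opset A, centraliser_clone F ->
       exists G : opset A, opset_sub G (upto_arity n) /\ opset_eq F (centraliser G);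
   (* (e) *) forall F : opset A, centraliser_clone F ->
       exists G : opset A, opset_sub G (of_arity n) /\ opset_eq F (centraliser G);
   (* (f) *) forall F : opset A,
       opset_eq (centraliser (nary n (centraliser F))) (centraliser (centraliser F));
   (* (g) *) forall F : opset A, centraliser_clone F ->
       opset_eq (centraliser (nary n (centraliser F))) F].
Proof.
tfae.
- by move=> Ha F cF; rewrite {2}(Ha F cF) tricentraliser.
- move=> Hb F cF.
  by rewrite (Hb F cF) (Hb _ (centraliser_clone_centraliser F)); apply: cF.
- move=> Hc F cF; exists (nary n (centraliser (nary n F))).
  split=> [g [_ n_g] | ]; first by rewrite /upto_arity n_g.
  by symmetry; apply: Hc.
- move=> Hd F cF; have [G [G_n FE]] := Hd F cF.
  exists (pad_ops n G); split; first exact: pad_ops_of_arity.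
  by rewrite centraliser_pad_ops.
- move=> He F.
  have [G [G_n FE]] := He _ (centraliser_clone_centraliser (centraliser F)).
  by have := centraliser_nary_centraliser_of_arity G_n FE; rewrite tricentraliser.
- by move=> Hf F cF; rewrite Hf; apply: cF.
- move=> Hg F cF; have := Hg _ (centraliser_clone_centraliser F).
  by rewrite (cF : opset_eq _ F) => ->; symmetry.
Qed.
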